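(* Let $N\in\mathbb{Z}$ and let $(a_n)_{n\le N}$ be elements of $\mathbb{C}_p$ with $a_n\to0$ as $n\to-\infty$. If the function $\sum_{n=-\infty}^N a_n(\mathbf x-\mathbf 1)^{\star n}$ (a uniformly convergent series in $C(\mathbb{Z}_p,\mathbb{C}_p)$) is identically zero, then $a_n=0$ for all $n\le N$. Consequently every function of the form $\sum_{n=-\infty}^N a_n(\mathbf x-\mathbf 1)^{\star n}$ determines its coefficients $a_n$ uniquely.
   Context: Fix a prime $p$. $\mathbb{C}_p$ denotes the completion of an algebraic closure of $\mathbb{Q}_p$, with absolute value $|\cdot|$ normalized by $|p|=1/p$. $C(\mathbb{Z}_p,\mathbb{C}_p)$ is the $\mathbb{C}_p$-Banach space of continuous functions $\mathbb{Z}_p\to\mathbb{C}_p$ with the sup-norm $\|\cdot\|$. For $n\in\mathbb{Z}_{\ge0}$ and $x\in\mathbb{Z}_p$, $\binom{x}{n}=x(x-1)\cdots(x-n+1)/n!$. For $y\in\mathbb{Z}_p$ and $\phi\in C(\mathbb{Z}_p,\mathbb{C}_p)$, $S^y(\phi)(x)=\sum_{k\ge0}(-1)^k k!\binom yk\binom xk\phi(x-k)$; each $S^y$ is norm-preserving. $\mathbf 1$ is the constant function $1$, $\mathbf x$ is $x\mapsto x$, and for $n\in\mathbb{Z}$, $(\mathbf x-\mathbf 1)^{\star n}:=(-1)^nS^n(\mathbf 1)$ (these have sup-norm $1$). *)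

From HB Require Import structures.
From mathcomp Require Import all_boot all_order all_algebra.
From mathcomp Require Import reals.
From Stdlib Require Import ClassicalEpsilon.
Set Implicit Arguments. Unset Strict Implicit. Unset Printing Implicit Defensive.
Import Order.TTheory GRing.Theory Num.Theory.
Local Open Scope ring_scope.

Section Defs.
Variables (R : realType) (K : fieldType) (abs : K -> R).

Definition nonarch_abs : Prop :=
  [/\ forall x, 0 <= abs x,
      forall x, abs x = 0 -> x = 0,
      abs 0 = 0,
      forall x y, abs (x * y) = abs x * abs y
    & forall x y, abs (x + y) <= Num.max (abs x) (abs y)].

Definition abs_complete : Prop :=
  forall u : nat -> K,
    (forall eps, 0 < eps -> exists M : nat, forall m n : nat,
        (M <= m)%N -> (M <= n)%N -> abs (u m - u n) < eps) ->
    exists l, forall eps, 0 < eps -> exists M : nat, forall m : nat,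
        (M <= m)%N -> abs (u m - l) < eps.

Definition alg_closed_field : Prop :=
  forall q : {poly K}, (1 < size q)%N -> exists x, root q x.

Definition algebraic_over_Q (x : K) : Prop :=
  exists q : {poly rat}, q != 0 /\ root (map_poly (@ratr K) q) x.

(* (K, abs) is (isometrically isomorphic to) C_p: a complete, algebraically
   closed, non-archimedean valued field with |p| = 1/p, in which the
   algebraic numbers (= an algebraic closure of Q_p, by Krasner) are dense. *)
Definition is_Cp (p : nat) : Prop :=
  [/\ nonarch_abs, abs_complete, alg_closed_field,
      abs (p%:R) = (p%:R)^-1
    & forall x eps, 0 < eps -> exists y, algebraic_over_Q y /\ abs (x - y) < eps].

Definition in_Zp (x : K) : Prop :=
  forall eps, 0 < eps -> exists n : nat, abs (x - n%:R) < eps.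

Definition series_to (u : nat -> K) (l : K) : Prop :=
  forall eps, 0 < eps -> exists M : nat, forall m : nat,
    (M <= m)%N -> abs (\sum_(k < m) u k - l) < eps.

(* the sum of a convergent series (0 if it does not converge) *)
Definition series_sum (u : nat -> K) : K :=
  epsilon (inhabits 0) (fun l => series_to u l \/ ~ (exists l', series_to u l') /\ l = 0).

Definition binomK (x : K) (k : nat) : K :=
  (\prod_(i < k) (x - i%:R)) / (k`!)%:R.

Definition Sop (y : K) (phi : K -> K) (x : K) : K :=
  series_sum (fun k => (-1) ^+ k * (k`!)%:R * binomK y k * binomK x k * phi (x - k%:R)).

Definition xm1_star (n : int) (x : K) : K :=
  (-1) ^ n * Sop (n%:~R) (fun _ => 1) x.

End Defs.

(* At a natural number x = m the series defining S^y(1)(x) is finite: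
   S^y(1)(m) = sum_(k <= m) (-1)^k C(m,k) y(y-1)...(y-k+1), a polynomial of degree m
   in y.  Hence the hypothesis says that sum_t (-1)^(N-t) a_(N-t) q(t) = 0 for the
   polynomials q of every degree, hence for all polynomials q.  The field has
   characteristic 0 because |p| = 1/p.  To isolate a_(N-t0), take L so large that
   |a_(N-t)| < e for t >= L, and for q the polynomial with roots 0, ..., t0-1 and
   t0+1, ..., t0+L normalized by q(t0) = 1: its other values at natural numbers are
   +-C(t,t0) C(t-t0-1,L), of absolute value at most 1, so |a_(N-t0)| < e. *)

From HB Require Import structures.
From mathcomp Require Import all_boot all_order all_algebra.
From mathcomp Require Import reals.
From mathcomp Require Import ring.
From Stdlib Require Import ClassicalEpsilon.
Import Order.TTheory GRing.Theory Num.Theory.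
Set Implicit Arguments. Unset Strict Implicit. Unset Printing Implicit Defensive.
Local Open Scope ring_scope.

Section Ultrametric.
Variables (R : realType) (K : fieldType) (abs : K -> R).
Hypothesis absK : nonarch_abs abs.

Lemma abs_ge0 x : 0 <= abs x. Proof. by case: absK. Qed.
Lemma abs_eq0 x : abs x = 0 -> x = 0. Proof. by case: absK => _ /(_ x). Qed.
Lemma abs0 : abs 0 = 0. Proof. by case: absK. Qed.
Lemma absM x y : abs (x * y) = abs x * abs y. Proof. by case: absK. Qed.
Lemma abs_ultra x y : abs (x + y) <= Num.max (abs x) (abs y). Proof. by case: absK. Qed.

Lemma abs1 : abs 1 = 1.
Proof.
have abs1_neq0 : abs 1 != 0 by apply: contra_neq (oner_neq0 K) => /abs_eq0.
by apply: (mulIf abs1_neq0); rewrite -absM !mul1r.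
Qed.

Lemma absV x : abs x^-1 = (abs x)^-1.
Proof.
have [->|x_neq0] := eqVneq x 0; first by rewrite invr0 abs0 invr0.
have absx_neq0 : abs x != 0 by apply: contra_neq x_neq0 => /abs_eq0.
by apply: (mulfI absx_neq0); rewrite -absM !mulfV ?abs1.
Qed.

Lemma absX x n : abs (x ^+ n) = abs x ^+ n.
Proof. by elim: n => [|n IHn]; rewrite ?abs1 // !exprS absM IHn. Qed.

Lemma absXz x (z : int) : abs (x ^ z) = abs x ^ z.
Proof. by case: z => n; rewrite ?NegzE -?exprnN ?absV absX. Qed.

Lemma absN1 : abs (-1) = 1.
Proof.
by apply/eqP; rewrite -(sqrp_eq1 (abs_ge0 _)) -absX sqrrN expr1n abs1.
Qed.

Lemma abs_signz (z : int) : abs ((-1) ^ z) = 1.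
Proof. by rewrite absXz absN1 exp1rz. Qed.

Lemma absN x : abs (- x) = abs x.
Proof. by rewrite -mulN1r absM absN1 mul1r. Qed.

Lemma absD_lt x y e : abs x < e -> abs y < e -> abs (x + y) < e.
Proof. by move=> xe ye; apply: le_lt_trans (abs_ultra x y) _; rewrite gt_max xe. Qed.

Lemma absB_lt x y e : abs x < e -> abs y < e -> abs (x - y) < e.
Proof. by move=> xe ye; rewrite absD_lt ?absN. Qed.

Lemma abs_sum_lt (I : Type) (r : seq I) (P : pred I) (F : I -> K) e :
  0 < e -> (forall i, P i -> abs (F i) < e) -> abs (\sum_(i <- r | P i) F i) < e.
Proof.
move=> e_gt0 Fe; elim/big_rec: _ => [|i x Pi xe]; first by rewrite abs0.
exact: absD_lt (Fe i Pi) xe.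
Qed.

Lemma abs_natr_le1 n : abs n%:R <= 1.
Proof.
elim: n => [|n IHn]; first by rewrite abs0 ler01.
by rewrite -natr1; apply: le_trans (abs_ultra _ _) _; rewrite ge_max IHn abs1 lexx.
Qed.

Lemma abs_small_eq0 x : (forall e, 0 < e -> abs x < e) -> x = 0.
Proof.
move=> small; apply: abs_eq0; apply/eqP; rewrite eq_le abs_ge0 andbT.
by rewrite leNgt; apply/negP => /small; rewrite ltxx.
Qed.

(* A prime q <> p with q = 0 in K gives 1 = -c p in K by Bezout, whence 1 = |c| |p| <= 1/p. *)
Lemma abs_prime_pchar0 p : prime p -> abs p%:R = p%:R^-1 -> [pchar K] =i pred0.
Proof.
move=> p_pr absp q; rewrite !inE; apply/negbTE/andP => -[q_pr /eqP q0].
have [qp|qp] := eqVneq q p.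
  move: absp; rewrite -qp q0 abs0 => /esym/eqP.
  by rewrite invr_eq0 pnatr_eq0 gtn_eqF ?prime_gt0.
have [c _] := Bezoutl p (prime_gt0 q_pr).
rewrite (eqP (_ : coprime q p)); last by rewrite prime_coprime // dvdn_prime2.
case/dvdnP=> k /(congr1 (fun n => n%:R : K)); rewrite natrM q0 mulr0 natrD natrM.
move/eqP; rewrite addr_eq0 => /eqP/(congr1 abs); rewrite abs1 absN absM absp => abs1E.
have p_inv_lt1 : p%:R^-1 < 1 :> R by rewrite invf_lt1 ?ltr1n ?prime_gt1 ?ltr0n ?prime_gt0.
have : abs (c%:R : K) * p%:R^-1 < 1.
  by apply: le_lt_trans p_inv_lt1; rewrite ler_piMl ?invr_ge0 ?ler0n ?abs_natr_le1.
by rewrite -abs1E ltxx.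
Qed.

Lemma eq_series_to u v l : u =1 v -> series_to abs u l -> series_to abs v l.
Proof.
move=> eq_uv ul e e_gt0; have [M uM] := ul e e_gt0; exists M => m Mm.
by under eq_bigr do rewrite -eq_uv; apply: uM.
Qed.

Lemma series_to_unique u l1 l2 : series_to abs u l1 -> series_to abs u l2 -> l1 = l2.
Proof.
move=> ul1 ul2; apply/eqP; rewrite -subr_eq0; apply/eqP/abs_small_eq0 => e e_gt0.
have [M1 uM1] := ul1 e e_gt0; have [M2 uM2] := ul2 e e_gt0.
set s := \sum_(k < maxn M1 M2) u k.
have -> : l1 - l2 = (s - l2) - (s - l1) by ring.
by apply: absB_lt; [apply: uM2 | apply: uM1]; rewrite ?leq_maxl ?leq_maxr.
Qed.

Lemma series_sumE u l : series_to abs u l -> series_sum abs u = l.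
Proof.
move=> ul; rewrite /series_sum; set P := fun _ => _.
have [ul'|[no_lim _]] : P (epsilon (inhabits 0) P) by apply: epsilon_spec; exists l; left.
  exact: series_to_unique ul' ul.
by case: no_lim; exists l.
Qed.

Lemma series_to_finite u m : (forall k, (m <= k)%N -> u k = 0) ->
  series_to abs u (\sum_(k < m) u k).
Proof.
move=> u0 e e_gt0; exists m => n mn.
rewrite -!(big_mkord xpredT) (big_cat_nat (leq0n m) mn) /= addrAC subrr add0r.
by rewrite big_nat_cond big1 ?abs0 // => k /andP[/andP[/u0]].
Qed.

Lemma series_toD u v lu lv : series_to abs u lu -> series_to abs v lv ->
  series_to abs (fun k => u k + v k) (lu + lv).
Proof.
move=> ul vl e e_gt0; have [Mu uM] := ul e e_gt0; have [Mv vM] := vl e e_gt0.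
exists (maxn Mu Mv) => m; rewrite geq_max => /andP[Mum Mvm].
by rewrite big_split /= opprD addrACA absD_lt ?uM ?vM.
Qed.

Lemma series_toZ c u l : series_to abs u l -> series_to abs (fun k => c * u k) (c * l).
Proof.
move=> ul e e_gt0; have [->|c_neq0] := eqVneq c 0.
  by exists 0%N => m _; rewrite big1 ?mul0r ?subrr ?abs0 // => k; rewrite mul0r.
have absc_gt0 : 0 < abs c.
  by rewrite lt_def abs_ge0 andbT; apply: contra_neq c_neq0 => /abs_eq0.
have [M uM] := ul (e / abs c) (divr_gt0 e_gt0 absc_gt0); exists M => m Mm.
by rewrite -mulr_sumr -mulrBr absM mulrC -ltr_pdivlMr // uM.
Qed.

End Ultrametric.

Section FallingFactorial.
Variable A : comNzRingType.

Definition ffpoly k : {poly A} := \prod_(i < k) ('X - i%:R%:P).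

Lemma ffpolyS k : ffpoly k.+1 = ffpoly k * ('X - k%:R%:P).
Proof. by rewrite /ffpoly big_ord_recr. Qed.

Lemma horner_ffpoly k x : (ffpoly k).[x] = \prod_(i < k) (x - i%:R).
Proof. by rewrite horner_prod; apply: eq_bigr => i _; rewrite hornerXsubC. Qed.

Lemma size_ffpoly k : size (ffpoly k) = k.+1.
Proof. by rewrite size_prod_XsubC [index_enum _]unlock -enumT size_enum_ord. Qed.

Lemma ffpoly_natr k n : (ffpoly k).[n%:R] = (n ^_ k)%:R.
Proof.
elim: k => [|k IHk]; first by rewrite /ffpoly big_ord0 hornerC.
rewrite ffpolyS hornerM IHk hornerXsubC ffactnSr natrM.
have [kn|nk] := leqP k n; first by rewrite natrB.
by rewrite ffact_small // !mul0r.
Qed.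

Lemma ffpoly_N1 k : (ffpoly k).[-1] = (-1) ^+ k * k`!%:R.
Proof.
elim: k => [|k IHk]; first by rewrite /ffpoly big_ord0 hornerC mul1r.
by rewrite ffpolyS hornerM IHk hornerXsubC factS natrM exprS -natr1; ring.
Qed.

End FallingFactorial.

Lemma graded_family_span (K : fieldType) (P : {poly K} -> Prop) (b : nat -> {poly K}) :
    (forall p q, P p -> P q -> P (p + q)) -> (forall c p, P p -> P (c *: p)) ->
    (forall m, size (b m) = m.+1) -> (forall m, P (b m)) ->
  forall q, P q.
Proof.
move=> PD PZ size_b Pb q.
suff P_size d : forall q : {poly K}, (size q <= d)%N -> P q by exact: P_size _ q (leqnn _).
elim: d => [|d IHd] {}q size_q.
  move: size_q; rewrite leqn0 size_poly_eq0 => /eqP->.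
  by rewrite -(scale0r (b 0)); apply: PZ (Pb 0).
have lc_b : (b d)`_d != 0.
  by rewrite -[d in _`_d]/(d.+1.-1) -size_b -lead_coefE lead_coef_eq0 -size_poly_eq0 size_b.
pose c := q`_d / (b d)`_d.
suff /IHd Pq' : (size (q - c *: b d)%R <= d)%N.
  by rewrite -[q](subrK (c *: b d)); apply: PD Pq' (PZ _ _ (Pb d)).
apply/leq_sizeP => j; rewrite leq_eqVlt => /orP[/eqP<-|dj].
  by rewrite coefB coefZ divfK ?subrr.
by rewrite coefB coefZ !nth_default ?mulr0 ?subrr ?size_b // (leq_trans size_q).
Qed.

Section CharZero.
Variable K : fieldType.
Hypothesis charK0 : [pchar K] =i pred0.

Lemma fact_neq0 k : k`!%:R != 0 :> K.
Proof. by rewrite ((pcharf0P K).1 charK0) -lt0n fact_gt0. Qed.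

Lemma binomK_ffpoly y k : binomK y k = (ffpoly K k).[y] / k`!%:R.
Proof. by rewrite horner_ffpoly. Qed.

Lemma binomK_natr m k : binomK m%:R k = 'C(m, k)%:R :> K.
Proof. by rewrite binomK_ffpoly ffpoly_natr -bin_ffact natrM mulfK ?fact_neq0. Qed.

Definition Sop1_poly m : {poly K} :=
  \sum_(k < m.+1) ((-1) ^+ k * 'C(m, k)%:R) *: ffpoly K k.

Lemma size_Sop1_poly m : size (Sop1_poly m) = m.+1.
Proof.
rewrite /Sop1_poly big_ord_recr /= binn mulr1 addrC size_polyDl.
  by rewrite size_scale ?signr_eq0 ?size_ffpoly.
rewrite size_scale ?signr_eq0 // size_ffpoly ltnS.
apply: leq_trans (size_sum _ _ _) _; apply/bigmax_leqP => k _.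
by rewrite (leq_trans (size_scale_leq _ _)) ?size_ffpoly.
Qed.

Definition peak_poly t0 L : {poly K} :=
  ((-1) ^+ L / (t0`! * L`!)%:R) *: (ffpoly K t0 * (ffpoly K L \Po ('X - t0.+1%:R%:P))).

Lemma horner_peak_poly t0 L x : (peak_poly t0 L).[x] =
  (-1) ^+ L / (t0`! * L`!)%:R * ((ffpoly K t0).[x] * (ffpoly K L).[x - t0.+1%:R]).
Proof. by rewrite hornerZ hornerM horner_comp hornerXsubC. Qed.

Lemma peak_poly_lt t0 L t : (t < t0)%N -> (peak_poly t0 L).[t%:R] = 0.
Proof. by move=> tt0; rewrite horner_peak_poly ffpoly_natr ffact_small // !mul0r mulr0. Qed.

Lemma peak_poly_at t0 L : (peak_poly t0 L).[t0%:R] = 1.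
Proof.
rewrite horner_peak_poly ffpoly_natr ffactnn -natr1 opprD addrA subrr sub0r ffpoly_N1.
have facts_neq0 : (t0`! * L`!)%:R != 0 :> K by rewrite natrM mulf_neq0 ?fact_neq0.
transitivity (((-1) ^+ L) ^+ 2 * ((t0`! * L`!)%:R / (t0`! * L`!)%:R) : K).
  by rewrite natrM; field; rewrite !fact_neq0.
by rewrite sqrr_sign divff ?mul1r.
Qed.

Lemma peak_poly_gt t0 L t : (t0 < t)%N ->
  (peak_poly t0 L).[t%:R] = (-1) ^+ L * ('C(t, t0) * 'C(t - t0.+1, L))%:R.
Proof.
move=> t0t; rewrite horner_peak_poly -natrB // !ffpoly_natr -!bin_ffact.
by rewrite !natrM; field; rewrite !fact_neq0.
Qed.

End CharZero.

Section ValuedCharZero.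
Variables (R : realType) (K : fieldType) (abs : K -> R).
Hypotheses (absK : nonarch_abs abs) (charK0 : [pchar K] =i pred0).

Lemma null_seq_poly_moments_eq0 (w : nat -> K) :
    (forall e, 0 < e -> exists M, forall t, (M <= t)%N -> abs (w t) < e) ->
    (forall q : {poly K}, series_to abs (fun t => w t * q.[t%:R]) 0) ->
  forall t, w t = 0.
Proof.
move=> w_null w_mom t0; apply: (abs_small_eq0 absK) => e e_gt0.
have [L wL] := w_null e e_gt0.
have [M wM] := w_mom (peak_poly K t0 L) e e_gt0.
have off_peak t : t != t0 -> abs (w t * (peak_poly K t0 L).[t%:R]) < e.
  case: ltngtP => // [tt0|t0t] _; first by rewrite peak_poly_lt // mulr0 abs0.
  rewrite peak_poly_gt //; have [Lt|tL] := leqP L t.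
    rewrite !(absM absK) (absX absK) (absN1 absK) expr1n mul1r.
    apply: le_lt_trans (wL _ Lt).
    by rewrite ler_piMr ?(abs_ge0 absK) ?(abs_natr_le1 absK).
  rewrite [in 'C(_, L)]bin_small ?muln0 ?mulr0 ?(abs0 absK) //.
  exact: leq_ltn_trans (leq_subr _ _) tL.
have t0_lt : (t0 < maxn M t0.+1)%N by rewrite leq_max ltnSn orbT.
have := wM _ (leq_maxl M t0.+1).
rewrite subr0 (bigD1 (Ordinal t0_lt)) //= peak_poly_at // mulr1.
set rest := \sum_(i | _) _ => wt0_rest.
rewrite -[w t0](addrK rest) (absB_lt absK) //.
apply: (abs_sum_lt absK) => // i i_neq; apply: off_peak.
by apply: contra_neq i_neq => eq_i; apply: val_inj.
Qed.

Lemma Sop1_natr y m : Sop abs y (fun _ => 1) m%:R = (Sop1_poly K m).[y].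
Proof.
rewrite /Sop (series_sumE absK (series_to_finite absK (m := m.+1) _)).
  rewrite horner_sum; apply: eq_bigr => k _.
  rewrite hornerZ (binomK_natr charK0) binomK_ffpoly mulr1.
  by field; rewrite fact_neq0.
by move=> k mk; rewrite (binomK_natr charK0) bin_small // mulr0 mul0r.
Qed.

Lemma xm1_star_poly_moments (N : int) (a : int -> K) :
    (forall x, in_Zp abs x ->
      series_to abs (fun m : nat => a (N - m%:Z) * xm1_star abs (N - m%:Z) x) 0) ->
  forall q : {poly K},
    series_to abs (fun t : nat => (-1) ^ (N - t%:Z) * a (N - t%:Z) * q.[t%:R]) 0.
Proof.
move=> hzero q.
pose P (q : {poly K}) :=
  series_to abs (fun t : nat => (-1) ^ (N - t%:Z) * a (N - t%:Z) * q.[(N - t%:Z)%:~R]) 0.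
have P_all : forall q, P q.
  apply: (graded_family_span (b := Sop1_poly K)) => [p r Pp Pr|c p Pp|m|m].
  - have := series_toD absK Pp Pr; rewrite addr0; apply: eq_series_to => t.
    by rewrite hornerD mulrDr.
  - have := series_toZ absK c Pp; rewrite mulr0; apply: eq_series_to => t.
    by rewrite hornerZ mulrCA.
  - exact: size_Sop1_poly.
  - have Zp_m : in_Zp abs m%:R by move=> e e_gt0; exists m; rewrite subrr abs0.
    apply: eq_series_to (hzero _ Zp_m) => t.
    by rewrite /xm1_star Sop1_natr mulrCA mulrA.
apply: eq_series_to (P_all (q \Po (N%:~R%:P - 'X))) => t.
by rewrite horner_comp hornerD hornerN hornerC hornerX intrB opprB addrCA subrr addr0.
Qed.

End ValuedCharZero.

Theorem proposition6p9 (p : nat) (pp : prime p) (R : realType) (K : fieldType)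
  (abs : K -> R) (HK : is_Cp abs p) (N : int) (a : int -> K)
  (ha : forall eps : R, 0 < eps -> exists M : int, forall n : int,
          n <= N -> n <= M -> abs (a n) < eps)
  (hzero : forall x : K, in_Zp abs x ->
          series_to abs (fun m : nat => a (N - m%:Z) * xm1_star abs (N - m%:Z) x) 0) :
  forall n : int, n <= N -> a n = 0.
Proof.
case: HK => absK _ _ absp _.
have charK0 := abs_prime_pchar0 absK pp absp.
pose w (t : nat) := (-1) ^ (N - t%:Z) * a (N - t%:Z).
have w_null e : 0 < e -> exists M, forall t, (M <= t)%N -> abs (w t) < e.
  move=> e_gt0; have [M aM] := ha e e_gt0; exists `|N - M|%N => t Mt.
  rewrite (absM absK) (abs_signz absK) mul1r aM ?gerDl ?oppr_le0 //.
  rewrite lerBlDr -lerBlDl (le_trans (ler_norm _)) // -abszE lez_nat.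
have w0 := null_seq_poly_moments_eq0 absK charK0 w_null
  (xm1_star_poly_moments absK charK0 hzero).
move=> n nN; have -> : n = N - (absz (N - n))%:Z.
  by rewrite gez0_abs ?subr_ge0 // opprB addrC subrK.
by move/eqP: (w0 (absz (N - n))); rewrite mulf_eq0 expfz_eq0 oppr_eq0 oner_eq0 andbF => /eqP.
Qed.
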